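(* Let $p,q\ge1$, $N>\max(p,q)$, let $\mu$ be a $q\times p$ matrix of measures, and assume $\mathscr M_N$ admits a Gauss--Borel factorization $\mathscr M_N=\mathscr L_N^{-1}\mathscr U_N^{-1}$ (with $\mathscr L_n,\mathscr U_n$, $n\le N$, the leading principal submatrices). With $\mathscr T^{[N-q,N]}:=\mathscr L_{N-q}\Lambda^{[N-q,N]}_{[q]}\mathscr L_N^{-1}$ and $\mathscr T^{[N,N-p]}:=\mathscr U_N^{-1}(\Lambda^{[N-p,N]}_{[p]})^\top\mathscr U_{N-p}$, the following recursion relations hold: \[\mathscr T^{[N-q,N]}B^{[N]}(x)=x\,B^{[N-q]}(x),\qquad A^{[N]}(x)\,\mathscr T^{[N,N-p]}=x\,A^{[N-p]}(x).\]
   Context: All matrices are indexed from $0$. $\mu$ is a $q\times p$ matrix of real measures with finite moments. For $r,n\ge1$, $X^{[n]}_{[r]}(x)$ is the $n\times r$ matrix whose row $k$ is $x^{\lfloor k/r\rfloor}e_{k\bmod r}^\top$ ($e_0,\dots,e_{r-1}$ standard basis of $\mathbb R^r$). Moment matrices: $\mathscr M^{[n,m]}=\int X^{[n]}_{[q]}\,\mathrm d\mu\,(X^{[m]}_{[p]})^\top$, $\mathscr M_n=\mathscr M^{[n,n]}$. Gauss--Borel factorization: $\mathscr M_N=\mathscr L_N^{-1}\mathscr U_N^{-1}$, $\mathscr L_N$ nonsingular lower triangular, $\mathscr U_N$ nonsingular upper triangular. For $n\le N$: $B^{[n]}(x):=\mathscr L_nX^{[n]}_{[q]}(x)$ ($n\times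 q$) and $A^{[n]}(x):=(X^{[n]}_{[p]}(x))^\top\mathscr U_n$ ($p\times n$). $\Lambda^{[n,n+r]}_{[r]}$ is the $n\times(n+r)$ matrix with entries $\delta_{j,i+r}$. *)

From HB Require Import structures.
From mathcomp Require Import all_boot all_order all_algebra.
From mathcomp Require Import all_classical all_reals all_analysis.
Set Implicit Arguments. Unset Strict Implicit. Unset Printing Implicit Defensive.
Import Order.TTheory GRing.Theory Num.Theory.
Local Open Scope ring_scope.

(* A real (signed) measure on R is represented by its Jordan-type
   decomposition mu = mu_pos - mu_neg, with mu_pos, mu_neg positive
   (Borel) measures on R. *)
Definition sint (R : realType) (mp mn : {measure set R -> \bar R})
  (f : R -> R) : R :=
  fine (\int[mp]_x (f x)%:E)%E - fine (\int[mn]_x (f x)%:E)%E.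

Definition finite_moments (R : realType) (m : {measure set R -> \bar R}) :=
  forall k : nat, m.-integrable setT (fun x : R => (x ^+ k)%:E).

Definition Xmat (R : realType) (n r : nat) (x : R) : 'M[R]_(n, r) :=
  \matrix_(k < n, j < r) (x ^+ (k %/ r)%N * ((j : nat) == (k %% r)%N)%:R).

(* Moment matrix M^{[n,m]} = \int X^{[n]}_{[q]} dmu (X^{[m]}_{[p]})^T,
   where mu = (mup a b - mun a b)_{a<q, b<p}. *)
Definition moment (R : realType) (q p : nat)
  (mup mun : 'I_q -> 'I_p -> {measure set R -> \bar R}) (n m : nat)
  : 'M[R]_(n, m) :=
  \matrix_(i < n, j < m)
    \sum_(a < q) \sum_(b < p)
      sint (mup a b) (mun a b)
        (fun x => Xmat n q x i a * Xmat m p x j b).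

Definition leadsub (R : realType) (N n : nat) (A : 'M[R]_N) : 'M[R]_n :=
  \matrix_(i < n, j < n)
    match @insub nat (fun k => (k < N)%N) 'I_N (val i),
          @insub nat (fun k => (k < N)%N) 'I_N (val j) with
    | Some i', Some j' => A i' j'
    | _, _ => 0
    end.

Definition Lam (R : realType) (n m r : nat) : 'M[R]_(n, m) :=
  \matrix_(i < n, j < m) ((j : nat) == (i + r)%N)%:R.

Definition lower_tri (R : realType) (N : nat) (A : 'M[R]_N) := is_trig_mx A.
Definition upper_tri (R : realType) (N : nat) (A : 'M[R]_N) := is_trig_mx A^T.

Definition Bvec (R : realType) (N q n : nat) (L : 'M[R]_N) (x : R)
  : 'M[R]_(n, q) := leadsub n L *m Xmat n q x.
Definition Avec (R : realType) (N p n : nat) (U : 'M[R]_N) (x : R)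
  : 'M[R]_(p, n) := (Xmat n p x)^T *m leadsub n U.

(* The shift Lam^{[n,n+r]}_{[r]} sends row k + r of X^{[n+r]}_{[r]}(x) to row k,
   and row k + r is x times row k, so Lam X^{[n+r]} = x X^{[n]}.  In
   T^{[N-q,N]} B^{[N]} the full-size factor L_N cancels against L_N^{-1},
   leaving L_{N-q} Lam X^{[N]}_{[q]} = x B^{[N-q]}; the relation for A is the
   transposed computation with U. *)

From HB Require Import structures.
From mathcomp Require Import all_boot all_order all_algebra.
From mathcomp Require Import all_classical all_reals all_analysis.
Import Order.TTheory GRing.Theory Num.Theory.
Local Open Scope ring_scope.

Section ShiftRelations.

Variable R : realType.

Lemma leadsub_id (N : nat) (A : 'M[R]_N) : leadsub N A = A.
Proof.
apply/matrixP=> i j; rewrite /leadsub mxE.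
case: insubP => [i' _ /val_inj-> | ]; last by rewrite ltn_ord.
by case: insubP => [j' _ /val_inj-> | ]; last by rewrite ltn_ord.
Qed.

Lemma mul_Lam_Xmat (n m r : nat) (x : R) :
  (n + r = m)%N -> Lam R n m r *m Xmat m r x = x *: Xmat n r x.
Proof.
move=> def_m; case: r def_m => [|r] def_m; first by apply/matrixP=> ? [].
apply/matrixP=> i j; rewrite !mxE.
have lt_ir_m : (i + r.+1 < m)%N by rewrite -def_m ltn_add2r.
rewrite (bigD1 (Ordinal lt_ir_m)) //= big1 ?addr0; last first.
  move=> k /eqP ne_k; rewrite !mxE.
  by case: eqP => [eq_k | _]; [case: ne_k; apply: val_inj | rewrite mul0r].
rewrite !mxE eqxx mul1r modnDr.
have -> : ((i + r.+1) %/ r.+1 = (i %/ r.+1).+1)%N.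
  by rewrite addnC -{1}(mul1n r.+1) divnMDl.
by rewrite exprS mulrA.
Qed.

Lemma trXmat_mul_trLam (n m r : nat) (x : R) :
  (n + r = m)%N -> (Xmat m r x)^T *m (Lam R n m r)^T = x *: (Xmat n r x)^T.
Proof. by move=> def_m; rewrite -trmx_mul mul_Lam_Xmat // linearZ. Qed.

End ShiftRelations.

Theorem mainTheorem7 (R : realType) (p q N : nat)
  (mup mun : 'I_q -> 'I_p -> {measure set R -> \bar R})
  (L U : 'M[R]_N) :
  (1 <= p)%N -> (1 <= q)%N -> (maxn p q < N)%N ->
  (forall a b, finite_moments (mup a b)) ->
  (forall a b, finite_moments (mun a b)) ->
  lower_tri L -> L \in unitmx ->
  upper_tri U -> U \in unitmx ->
  moment mup mun N N = invmx L *m invmx U ->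
  forall x : R,
    (leadsub (N - q) L *m Lam R (N - q) N q *m invmx L) *m Bvec q N L x
      = x *: Bvec q (N - q) L x
  /\ Avec p N U x *m (invmx U *m (Lam R (N - p) N p)^T *m leadsub (N - p) U)
      = x *: Avec p (N - p) U x.
Proof.
move=> _ _ ltN _ _ _ unitL _ unitU _ x.
have splitNq : (N - q + q = N)%N by rewrite subnK // ltnW // (leq_ltn_trans (leq_maxr p q)).
have splitNp : (N - p + p = N)%N by rewrite subnK // ltnW // (leq_ltn_trans (leq_maxl p q)).
rewrite /Bvec /Avec !leadsub_id; split.
- rewrite -mulmxA (mulmxA (invmx L)) mulVmx // mul1mx.
  by rewrite -mulmxA mul_Lam_Xmat // scalemxAr.
- rewrite !mulmxA -(mulmxA _ U) mulmxV // mulmx1.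
  by rewrite trXmat_mul_trLam // scalemxAl.
Qed.
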